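(* Let $q$ be odd and $c\in{\mathbb F}_q$. Then $$\prod\{c-a: a\in\mathcal B_2^{--}\}=\begin{cases}2&c=2,\\ \left(\frac2q\right)2 & c=-2,\\ \sqrt{c+2}& c\in\mathcal B_2^{-+},\\ -\left(\frac2q\right)\sqrt{2-c}& c\in\mathcal B_2^{+-},\\ 2 & c\in\mathcal B_2^{++}\text{ and }\sqrt{c+2}\in\mathcal B_2^{++},\\ -2& c\in\mathcal B_2^{++}\text{ and }\sqrt{c+2}\notin\mathcal B_2^{++},\\ 0& c\in\mathcal B_2^{--},\end{cases}$$ where in the third case $\sqrt{c+2}$ is chosen so that $\sqrt{c+2}+2$ is a square, and in the fourth case $\sqrt{2-c}$ is chosen so that $\sqrt{2-c}+2$ is a nonsquare. Moreover, if $c\in\mathcal B_2^{++}$ then the two square roots $\pm\sqrt{c+2}$ either both lie in $\mathcal B_2^{++}$ or both lie in $\mathcal B_2^{--}$.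
   Context: $\left(\frac{a}{q}\right)$ is the Legendre symbol on ${\mathbb F}_q$. For $\varepsilon_1,\varepsilon_2\in\{1,-1\}$ (written $+,-$), $\mathcal B_2^{\varepsilon_1,\varepsilon_2}=\{b\in{\mathbb F}_q:\left(\frac{2-b}{q}\right)=\varepsilon_1,\ \left(\frac{2+b}{q}\right)=\varepsilon_2\}$. Note ${\mathbb F}_q=\{2,-2\}\sqcup\bigsqcup_{\varepsilon_1,\varepsilon_2}\mathcal B_2^{\varepsilon_1,\varepsilon_2}$. *)

From HB Require Import structures.
From mathcomp Require Import all_boot all_order all_algebra all_field.
Set Implicit Arguments. Unset Strict Implicit. Unset Printing Implicit Defensive.
Import Order.TTheory GRing.Theory Num.Theory.
Local Open Scope ring_scope.

Definition legendre (F : finFieldType) (a : F) : int :=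
  if a == 0 then 0 else if [exists b : F, b ^+ 2 == a] then 1 else -1.

Definition B2 (F : finFieldType) (e1 e2 : int) : {set F} :=
  [set b : F | (legendre (2 - b) == e1) && (legendre (2 + b) == e2)].

From HB Require Import structures.
From mathcomp Require Import all_boot all_order all_algebra all_field.
From mathcomp Require Import ring zify.
Set Implicit Arguments. Unset Strict Implicit. Unset Printing Implicit Defensive.
Import Order.TTheory GRing.Theory Num.Theory.
Local Open Scope ring_scope.

(* Write m = (q - 1) / 2, so that Euler's criterion reads (a/q) = a ^ m.  Everything
   follows from the polynomial identity
     (X + 2) ^ (m + 1) + (2 - X) ^ (m + 1) = 2 * prod_(a in B--) (X ^ 2 - (2 + a)).
   The nonsquares n = 2 + a are exactly the a in B-- and B+-, and their product
   prod (X - n) is X ^ m + 1; hence the right-hand side D0 for B-- and its analogue D1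
   for B+- satisfy D0 * D1 = X ^ (q - 1) + 1, while the sum and difference U, V of the
   two powers satisfy U * V = 4 X (X ^ (q - 1) + 1) and are coprime.  The squares U ^ 2
   and V ^ 2 are polynomials in X ^ 2 vanishing at 2 + a for a in B-- resp. B+-, so
   D0 divides U ^ 2 and hence U; likewise X * D1 divides V.  Comparing leading
   coefficients then gives U = 2 * D0.
   Evaluating at s with s ^ 2 = c + 2 gives 2 P(c) = (s + 2) (s + 2) ^ m + (2 - s) (2 - s) ^ m,
   where (s + 2) ^ m (2 - s) ^ m = (2 - c) ^ m; this settles every case, the case of B+-
   being reduced to B-+ by P(c) = (2/q) P(-c), which holds because B-- = - B--. *)

Lemma monic_dvdp_mul_eq (R : idomainType) (f g p r : {poly R}) :
    f \is monic -> p \is monic -> f * g != 0 ->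
  p %| f -> r %| g -> p * r = f * g -> p = f.
Proof.
move=> fmon pmon fg0 pf rg prE.
have [f0 g0] : f != 0 /\ g != 0 by apply/andP; rewrite -negb_or -mulf_eq0.
have [p0 r0] : p != 0 /\ r != 0 by apply/andP; rewrite -negb_or -mulf_eq0 prE.
have := congr1 (fun q : {poly R} => size q) prE; rewrite /= !size_mul //.
have := dvdp_leq f0 pf; have := dvdp_leq g0 rg.
rewrite -size_poly_gt0 in p0 r0 f0 g0.
move=> ???; apply/eqP; rewrite -eqp_monic // -dvdp_size_eqp //; apply/eqP; lia.
Qed.

Lemma coprimep_addB (R : fieldType) (p q : {poly R}) :
  (2 : R) != 0 -> coprimep p q -> coprimep (p + q) (p - q).
Proof.
move=> two0 /Bezout_coprimepP [[u v] /= uv]; apply/Bezout_coprimepP.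
exists ((2^-1)%:P * (u + v), (2^-1)%:P * (u - v)) => /=.
suff -> : (2^-1)%:P * (u + v) * (p + q) + (2^-1)%:P * (u - v) * (p - q) = u * p + v * q by [].
have half2 : (2^-1)%:P * 2 = 1 :> {poly R}.
  by rewrite -(rmorph_nat polyC 2) -polyCM mulVf // polyC1.
set h := (2^-1)%:P in half2 *; rewrite -[RHS]mul1r -half2; ring.
Qed.

Lemma dvdp_of_dvdp_sqr (R : fieldType) (d u v : {poly R}) :
  d %| u ^+ 2 -> coprimep u v -> d %| u * v -> d %| u.
Proof.
move=> du2 uv; rewrite Gauss_dvdpl //.
by apply: coprimep_dvdr du2 _; apply: coprimep_expl.
Qed.

Lemma odd_size_comp_X2 (R : idomainType) (p : {poly R}) :
  p != 0 -> odd (size (p \Po 'X^2)).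
Proof.
move=> p0; have := size_comp_poly p 'X^2; rewrite size_polyXn /=.
have : (0 < size (p \Po 'X^2))%N by rewrite size_poly_gt0 comp_poly_eq0 ?size_polyXn.
by case: size => //= n _ ->; rewrite oddM andbF.
Qed.

Lemma lead_coefD_odd_even (R : nzRingType) (p q : {poly R}) :
    odd (size p) -> ~~ odd (size q) ->
  lead_coef (p + q) = lead_coef p \/ lead_coef (p + q) = lead_coef q.
Proof.
move=> op eq; case: (ltngtP (size p) (size q)) => [lt|gt|pq].
- by right; rewrite lead_coefDr.
- by left; rewrite lead_coefDl.
- by move: eq; rewrite -pq op.
Qed.

Lemma monic_comp_X2 (R : idomainType) (p : {poly R}) :
  p \is monic -> p \Po 'X^2 \is monic.
Proof.
move=> pmon; rewrite monicE lead_coef_comp ?size_polyXn //.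
by rewrite lead_coefXn expr1n mulr1 -monicE.
Qed.

Section OddFiniteField.
Variable F : finFieldType.
Hypothesis oddF : odd #|F|.
Local Notation m := #|F|./2.

Lemma card_half : #|F| = (m * 2).+1.
Proof. by rewrite -{1}(odd_double_half #|F|) oddF muln2. Qed.

Lemma half_card_gt0 : (0 < m)%N.
Proof. by have := finNzRing_gt1 F; rewrite card_half; case: m. Qed.

Lemma two_neq0 : (2 : F) != 0.
Proof.
apply/eqP => two0; have char2 : 2 \in [pchar F] by rewrite inE /= two0 eqxx.
have cardF : #|F| = #|pPrimeCharType char2| by [].
move: oddF (finNzRing_gt1 F); rewrite cardF card_pprimeChar.
by case: logn => [|n] //=; rewrite oddX.
Qed.

Lemma four_neq0 : (4 : F) != 0.
Proof. by rewrite (_ : 4 = 2 * 2) ?mulf_neq0 ?two_neq0 // -natrM. Qed.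

Lemma expr_half_card_sqr (x : F) : x != 0 -> (x ^+ m) ^+ 2 = 1.
Proof.
move=> x0; rewrite -exprM; apply: (mulIf x0).
by rewrite mul1r -exprSr -card_half expf_card.
Qed.

Lemma sqr_expr_half_card (b : F) : b != 0 -> (b ^+ 2) ^+ m = 1.
Proof. by move=> b0; rewrite -exprM mulnC exprM expr_half_card_sqr. Qed.

Lemma expr_half_card_pm1 (x : F) : x != 0 -> x ^+ m = 1 \/ x ^+ m = -1.
Proof. by move/expr_half_card_sqr/eqP; rewrite sqrf_eq1 => /orP[]/eqP; [left|right]. Qed.

Lemma expr_half_card_eq1_sqr (x : F) : x ^+ m = 1 -> exists b, b ^+ 2 = x.
Proof.
move=> xm1.
have : 'X^2 - x%:P %| \prod_(y : F) ('X - y%:P).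
  have -> : \prod_(y : F) ('X - y%:P) = 'X * (('X^2) ^+ m - x%:P ^+ m).
    by rewrite -finField_genPoly -rmorphXn /= xm1 mulrBr mulr1 -exprM mulnC -exprS -card_half.
  by rewrite subrXX dvdp_mull // dvdp_mulr.
case/dvdp_prod_XsubC => s; case: (mask s _) => [|y r].
  by rewrite big_nil => /eqp_size; rewrite size_poly1 size_XnsubC.
rewrite big_cons => /(eqp_dvdr ('X - y%:P)); rewrite dvdp_mulr // dvdp_XsubCl.
by rewrite rootE !hornerE subr_eq0 => /eqP; exists y.
Qed.

Lemma legendreE (x : F) : (legendre x)%:~R = x ^+ m.
Proof.
rewrite /legendre; have [->|x0] := eqVneq x 0; first by rewrite expr0n eqn0Ngt half_card_gt0.
case: existsP => [[b /eqP bx]|noroot].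
  rewrite -bx sqr_expr_half_card //; move: x0.
  by rewrite -bx; apply: contra_neq => ->; rewrite expr0n.
have [xm1|->//] := expr_half_card_pm1 x0.
by case: noroot; have [b <-] := expr_half_card_eq1_sqr xm1; exists b.
Qed.

Lemma legendre_pm1 (x : F) : x != 0 -> legendre x = 1 \/ legendre x = -1.
Proof. by rewrite /legendre => /negPf ->; case: ifP; [left|right]. Qed.

Lemma one_neqN1 : (1 : F) != -1.
Proof. by rewrite -subr_eq0 opprK two_neq0. Qed.

Lemma expr_half_card_neq0 (x : F) : x ^+ m != 0 -> x != 0.
Proof. by apply: contraNneq => ->; rewrite expr0n eqn0Ngt half_card_gt0. Qed.

Lemma legendre_eq1 (x : F) : legendre x = 1 <-> x ^+ m = 1.
Proof.
split=> [legx|xm]; first by rewrite -legendreE legx.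
have x0 : x != 0 by rewrite expr_half_card_neq0 // xm oner_neq0.
case: (legendre_pm1 x0) => // /(congr1 (fun z : int => z%:~R : F)); rewrite legendreE xm => /eqP.
by rewrite (negPf one_neqN1).
Qed.

Lemma legendre_eqN1 (x : F) : legendre x = -1 <-> x ^+ m = -1.
Proof.
split=> [legx|xm]; first by rewrite -legendreE legx.
have x0 : x != 0 by rewrite expr_half_card_neq0 // xm oppr_eq0 oner_neq0.
case: (legendre_pm1 x0) => // /(congr1 (fun z : int => z%:~R : F)); rewrite legendreE xm => /eqP.
by rewrite eq_sym (negPf one_neqN1).
Qed.

Lemma prod_XsubC_neq0 : \prod_(x : F | x != 0) ('X - x%:P) = 'X^(m * 2) - 1.
Proof.
apply: (@mulfI _ 'X); first by rewrite polyX_eq0.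
have := finField_genPoly F; rewrite (bigD1 0) //= subr0 => <-.
by rewrite mulrBr mulr1 -exprS -card_half.
Qed.

Lemma dvdp_prod_XsubC_pred (P : pred F) (e : F) :
  (forall x, P x -> x ^+ m = e) -> \prod_(x | P x) ('X - x%:P) %| 'X^m - e%:P.
Proof.
move=> Pe; rewrite -big_filter; apply: uniq_roots_dvdp.
  by apply/allP => x; rewrite mem_filter => /andP[/Pe xe _]; rewrite rootE !hornerE xe subrr.
by rewrite uniq_rootsE filter_uniq // index_enum_uniq.
Qed.

Lemma prod_XsubC_nonsquares : \prod_(x : F | legendre x == -1) ('X - x%:P) = 'X^m + 1.
Proof.
have nonsq0 (x : F) : legendre x == -1 -> x != 0.
  by apply: contraTneq => ->; rewrite /legendre eqxx.
apply: (@monic_dvdp_mul_eq _ _ ('X^m - 1 : {poly F}) _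
          (\prod_(x : F | legendre x == 1) ('X - x%:P))).
- by rewrite monicXnaddC // half_card_gt0.
- exact: monic_prod_XsubC.
- by rewrite mulf_neq0 // monic_neq0 // ?monicXnaddC ?monicXnsubC // half_card_gt0.
- have -> : 'X^m + 1 = 'X^m - (-1)%:P :> {poly F} by rewrite polyCN polyC1 opprK.
  by apply: dvdp_prod_XsubC_pred => x /eqP /legendre_eqN1.
- by rewrite -polyC1; apply: dvdp_prod_XsubC_pred => x /eqP /legendre_eq1.
rewrite [RHS]mulrC -subr_sqr_1 -exprM -prod_XsubC_neq0 [RHS](bigID (fun x => legendre x == -1)) /=.
congr (_ * _); apply: eq_bigl => x.
  by apply/idP/idP => [lx|/andP[]//]; rewrite nonsq0.
case: (eqVneq x 0) => [->|x0]; first by rewrite /legendre eqxx.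
by case: (legendre_pm1 x0) => ->.
Qed.

Lemma legendre_sqr (b : F) : b != 0 -> legendre (b ^+ 2) = 1.
Proof. by move=> b0; apply/legendre_eq1/sqr_expr_half_card. Qed.

Lemma XaddC_expr_card (c : F) : ('X + c%:P) ^+ #|F| = 'X^#|F| + c%:P.
Proof.
have shift : ('X + c%:P) ^+ #|F| - ('X + c%:P) = 'X^#|F| - 'X.
  have := congr1 (comp_poly ('X + c%:P)) (finField_genPoly F).
  rewrite comp_polyB comp_polyX rmorphXn /= comp_polyX => ->.
  rewrite rmorph_prod [RHS]finField_genPoly (reindex_inj (addIr c)) /=.
  apply: eq_bigr => x _; rewrite comp_polyB comp_polyX comp_polyC polyCD.
  by rewrite opprD addrACA subrr addr0.
by rewrite -(subrK ('X + c%:P) (_ ^+ _)) shift addrA subrK.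
Qed.

Local Notation Pp := (('X + 2) ^+ m.+1 : {poly F}).
Local Notation Pm := ((2 - 'X) ^+ m.+1 : {poly F}).

Lemma expr_card_half (R : pzRingType) (x : R) : x ^+ #|F| = x * x ^+ (m * 2).
Proof. by rewrite -exprS -card_half. Qed.

Lemma addn_half_card_succ : (m.+1 + m.+1 = #|F|.+1)%N.
Proof. by rewrite [in RHS]card_half; lia. Qed.

Lemma Pp_sqr : Pp * Pp = ('X^#|F| + 2) * ('X + 2).
Proof.
by rewrite -exprD addn_half_card_succ exprSr -(rmorph_nat polyC 2) XaddC_expr_card.
Qed.

Lemma Pm_sqr : Pm * Pm = (2 - 'X^#|F|) * (2 - 'X).
Proof.
rewrite -exprD addn_half_card_succ exprSr; congr (_ * _).
have -> : 2 - 'X = - ('X + (-2)%:P) :> {poly F}.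
  by rewrite polyCN (rmorph_nat polyC 2) opprD opprK addrC.
by rewrite exprNn -signr_odd oddF XaddC_expr_card polyCN (rmorph_nat polyC 2); ring.
Qed.

Lemma Pp_mul_Pm : Pp * Pm = (4 - 'X^2) ^+ m.+1.
Proof. by rewrite -exprMn; congr (_ ^+ _); ring. Qed.

Lemma PpDPm_mul_PpBPm : (Pp + Pm) * (Pp - Pm) = 4 * 'X * ('X^(m * 2) + 1).
Proof.
have -> : (Pp + Pm) * (Pp - Pm) = Pp * Pp - Pm * Pm by ring.
by rewrite Pp_sqr Pm_sqr expr_card_half; ring.
Qed.

Definition sqr_poly (e : F) : {poly F} := 2 * 'X ^+ m.+1 + 8 + 2 * e%:P * (4 - 'X) ^+ m.+1.

Lemma sqr_PpDPm (e : F) : e ^+ 2 = 1 -> (Pp + e%:P * Pm) ^+ 2 = sqr_poly e \Po 'X^2.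
Proof.
move=> e2; have e2P : e%:P ^+ 2 = 1 by rewrite -rmorphXn e2.
have -> : (Pp + e%:P * Pm) ^+ 2 = Pp * Pp + e%:P ^+ 2 * (Pm * Pm) + 2 * e%:P * (Pp * Pm) by ring.
rewrite e2P mul1r Pp_sqr Pm_sqr Pp_mul_Pm /sqr_poly.
rewrite !(rmorph_nat, rmorphD, rmorphB, rmorphN, rmorphM, rmorphXn) /= comp_polyC comp_polyX.
have X2 : ('X^2) ^+ m.+1 = 'X^2 * 'X^(m * 2) :> {poly F} by rewrite -exprM mulnS exprD mulnC.
by rewrite X2 expr_card_half; ring.
Qed.

Lemma root_sqr_poly (e x : F) :
  e ^+ 2 = 1 -> x ^+ m = -1 -> (4 - x) ^+ m = - e -> root (sqr_poly e) x.
Proof.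
move=> e2 xm ym; rewrite rootE /sqr_poly -horner_evalE.
rewrite !(rmorph_nat, rmorphD, rmorphB, rmorphN, rmorphM, rmorphXn) /=.
rewrite !horner_evalE hornerC hornerX !exprS xm ym; apply/eqP.
by transitivity (2 * (4 - x) * (1 - e ^+ 2)); [ring | rewrite e2 subrr mulr0].
Qed.

Definition shift2_poly (A : {set F}) : {poly F} := \prod_(a in A) ('X - (2 + a)%:P).

Lemma monic_shift2_poly_comp (A : {set F}) : shift2_poly A \Po 'X^2 \is monic.
Proof. exact/monic_comp_X2/monic_prod_XsubC. Qed.

Lemma dvdp_shift2_poly (A : {set F}) (p : {poly F}) :
  {in A, forall a, root p (2 + a)} -> shift2_poly A %| p.
Proof.
move=> rootA; rewrite /shift2_poly -big_enum -(big_map (+%R 2) xpredT (fun x => 'X - x%:P)).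
apply: uniq_roots_dvdp; last by rewrite uniq_rootsE (map_inj_uniq (addrI 2)) enum_uniq.
by apply/allP => _ /mapP[a aA ->]; apply: rootA; rewrite -mem_enum.
Qed.

Local Notation Bmm := (B2 F (-1) (-1)).
Local Notation Bpm := (B2 F 1 (-1)).
Local Notation D0 := (shift2_poly Bmm \Po 'X^2).
Local Notation D1 := (shift2_poly Bpm \Po 'X^2).

Lemma shift2_poly_Bmm_Bpm : shift2_poly Bmm * shift2_poly Bpm = 'X^m + 1.
Proof.
rewrite -prod_XsubC_nonsquares (reindex_inj (addrI 2)) /=.
rewrite (bigID (fun a => legendre (2 - a) == -1)) /=.
congr (_ * _); apply: eq_bigl => a; rewrite inE; first by rewrite andbC.
have [->|a2] := eqVneq a 2.
  have -> : (2 + 2 : F) = 2 ^+ 2 by rewrite expr2 mulr_natl mulr2n.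
  by rewrite legendre_sqr ?two_neq0 // [_ && _]andbC.
have : 2 - a != 0 by rewrite subr_eq0 eq_sym.
by case/legendre_pm1 => ->; rewrite andbC.
Qed.

Lemma D0_mul_D1 : D0 * D1 = 'X^(m * 2) + 1.
Proof.
rewrite -comp_polyM shift2_poly_Bmm_Bpm rmorphD rmorphXn /= comp_polyX.
by rewrite -polyC1 comp_polyC -exprM mulnC.
Qed.

Lemma dvdp_sqr_shift2_poly (A : {set F}) (e : F) : e ^+ 2 = 1 ->
    {in A, forall a, (2 + a) ^+ m = -1 /\ (2 - a) ^+ m = - e} ->
  shift2_poly A \Po 'X^2 %| (Pp + e%:P * Pm) ^+ 2.
Proof.
move=> e2 Ae; rewrite sqr_PpDPm //; apply/dvdp_comp_poly/dvdp_shift2_poly => a /Ae [ap am].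
by apply: root_sqr_poly => //; rewrite (_ : 4 - (2 + a) = 2 - a) //; ring.
Qed.

Lemma coprimep_Pp_Pm : coprimep Pp Pm.
Proof.
apply/coprimep_expl/coprimep_expr/Bezout_coprimepP.
exists ((4^-1)%:P, (4^-1)%:P) => /=.
rewrite -mulrDr (_ : 'X + 2 + (2 - 'X) = (4 : F)%:P); last by rewrite (rmorph_nat polyC 4); ring.
by rewrite -polyCM mulVf ?four_neq0 // polyC1 eqpxx.
Qed.

Lemma dvdp_D0_PpDPm : D0 %| Pp + Pm.
Proof.
apply: (@dvdp_of_dvdp_sqr _ _ _ (Pp - Pm)).
- rewrite -[Pm]mul1r -polyC1; apply: dvdp_sqr_shift2_poly; first exact: expr1n.
  by move=> a; rewrite inE => /andP[/eqP/legendre_eqN1 am /eqP/legendre_eqN1 ap].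
- exact/coprimep_addB/coprimep_Pp_Pm/two_neq0.
by rewrite PpDPm_mul_PpBPm -D0_mul_D1 mulrA; apply/dvdp_mulr/dvdp_mull/dvdpp.
Qed.

Lemma dvdp_XD1_PpBPm : 'X * D1 %| Pp - Pm.
Proof.
have D1_0 : ~~ root D1 0.
  apply/negP => /rootP D10; have := congr1 (horner^~ 0) D0_mul_D1.
  rewrite /= hornerM D10 mulr0 hornerD hornerXn expr0n muln_eq0 eqn0Ngt half_card_gt0 /=.
  by rewrite hornerC add0r => /esym/eqP; rewrite oner_eq0.
rewrite Gauss_dvdp; last by rewrite coprimep_sym -[X in coprimep _ X]subr0 -polyC0 coprimep_XsubC.
apply/andP; split.
  by rewrite -[X in X %| _]subr0 -polyC0 dvdp_XsubCl rootE !hornerE subr0 subrr.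
apply: (@dvdp_of_dvdp_sqr _ _ _ (Pp + Pm)).
- have -> : Pp - Pm = Pp + (-1)%:P * Pm by rewrite polyCN polyC1 mulN1r.
  apply: dvdp_sqr_shift2_poly; first by rewrite sqrrN expr1n.
  by move=> a; rewrite inE opprK => /andP[/eqP/legendre_eq1 am /eqP/legendre_eqN1 ap].
- by rewrite coprimep_sym; exact/coprimep_addB/coprimep_Pp_Pm/two_neq0.
by rewrite mulrC PpDPm_mul_PpBPm -D0_mul_D1 mulrA; apply/dvdp_mull/dvdpp.
Qed.

Lemma PpDPm_eq : Pp + Pm = 2 * D0.
Proof.
have [K1 PpDPmE] := dvdpP _ _ dvdp_D0_PpDPm.
have [K2 PpBPmE] := dvdpP _ _ dvdp_XD1_PpBPm.
have D0n0 := monic_neq0 (monic_shift2_poly_comp Bmm).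
have D1n0 := monic_neq0 (monic_shift2_poly_comp Bpm).
have K12 : K1 * K2 = 4.
  apply: (@mulIf _ ('X * (D0 * D1))); first by rewrite !mulf_neq0 ?polyX_eq0.
  transitivity ((Pp + Pm) * (Pp - Pm)); first by rewrite PpDPmE PpBPmE; ring.
  by rewrite PpDPm_mul_PpBPm -D0_mul_D1 !mulrA.
have polyC_of (K K' : {poly F}) : K * K' = 4 -> exists2 k, k != 0 & K = k%:P.
  move=> KK'; have : size (K * K') == 1 by rewrite KK' -(rmorph_nat polyC 4) size_polyC four_neq0.
  rewrite size_mul_eq1 => /andP[/eqP sK _]; exists K`_0; last by rewrite -size1_polyC ?sK.
  by rewrite (_ : K`_0 = lead_coef K) ?lead_coef_eq0 -?size_poly_gt0 ?sK // lead_coefE sK.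
(* K1 and K2 are constants k, k'; the summands of 2 Pp = k D0 + k' X D1 have sizes of
   opposite parity, so the leading coefficient 2 of 2 Pp is k or k'. *)
have [k k0 K1E] := polyC_of _ _ K12.
have [k' k'0 K2E] := polyC_of K2 K1 (etrans (mulrC K2 K1) K12).
have kk' : k * k' = 4 by apply: polyC_inj; rewrite polyCM -K1E -K2E K12 (rmorph_nat polyC 4).
have twoPp : (2 : F)%:P * Pp = k%:P * D0 + k'%:P * ('X * D1).
  by rewrite -K1E -K2E -PpDPmE -PpBPmE (rmorph_nat polyC 2); ring.
have Pp_monic : Pp \is monic by rewrite monic_exp // -(rmorph_nat polyC 2) monicXaddC.
have XD1_monic : 'X * D1 \is monic by rewrite monicMl ?monicX ?monic_shift2_poly_comp.
have k2 : k = 2.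
  have [||lead_k|lead_k'] := lead_coefD_odd_even (p := k%:P * D0) (q := k'%:P * ('X * D1)).
  - by rewrite size_Cmul // odd_size_comp_X2 // monic_neq0 ?monic_prod_XsubC.
  - by rewrite size_Cmul // mulrC size_mulX //= odd_size_comp_X2 // monic_neq0 ?monic_prod_XsubC.
  - by move: lead_k; rewrite -twoPp !lead_coef_Mmonic ?monic_shift2_poly_comp // !lead_coefC.
  move: lead_k'; rewrite -twoPp !lead_coef_Mmonic // !lead_coefC => k'2.
  by apply: (mulIf two_neq0); rewrite {1}k'2 kk' -natrM.
by rewrite PpDPmE K1E k2 (rmorph_nat polyC 2).
Qed.

Local Notation prodB c := (\prod_(a in B2 F (-1) (-1)) (c - a)).

Lemma prodB_sqrt (c s : F) : s ^+ 2 = c + 2 ->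
  2 * prodB c = (s + 2) * (s + 2) ^+ m + (2 - s) * (2 - s) ^+ m.
Proof.
move=> sc; have := congr1 (horner^~ s) PpDPm_eq; rewrite /= -!horner_evalE.
rewrite !(rmorph_nat, rmorphD, rmorphB, rmorphN, rmorphM, rmorphXn) /= !horner_evalE hornerX.
rewrite horner_comp hornerXn horner_prod -!exprS => ->; congr (_ * _).
by apply: eq_bigr => a _; rewrite hornerD hornerN hornerX hornerC sc opprD addrA addrK.
Qed.

Lemma expr_half_card_sqrt_mul (c s : F) : s ^+ 2 = c + 2 ->
  (s + 2) ^+ m * (2 - s) ^+ m = (2 - c) ^+ m.
Proof.
move=> sc; rewrite -exprMn; congr (_ ^+ _).
by rewrite (_ : 2 - c = 4 - s ^+ 2); [ring | rewrite sc; ring].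
Qed.

Lemma prodB_2 : prodB 2 = 2.
Proof.
have two2 : (2 + 2 : F) = 2 ^+ 2 by rewrite expr2 mulr_natl mulr2n.
have := prodB_sqrt (esym two2); rewrite subrr expr0n eqn0Ngt half_card_gt0 mulr0 addr0.
by rewrite two2 sqr_expr_half_card ?two_neq0 // mulr1 => /(mulfI two_neq0).
Qed.

Lemma prodB_N2 : prodB (-2) = 2 ^+ m * 2.
Proof.
have s0 : (0 : F) ^+ 2 = -2 + 2 by rewrite expr0n addNr.
have := prodB_sqrt s0; rewrite add0r subr0 -mulrDr => /(mulfI two_neq0) ->.
by rewrite mulr_natr mulr2n.
Qed.

Lemma mem_B2N (b : F) (e1 e2 : int) : (- b \in B2 F e1 e2) = (b \in B2 F e2 e1).
Proof. by rewrite !inE opprK andbC. Qed.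

Lemma prod_subr_sym (A : {set F}) (c : F) : (forall a, (- a \in A) = (a \in A)) ->
  \prod_(a in A) (c - a) = (-1) ^+ #|A| * \prod_(a in A) (- c - a).
Proof.
move=> symA; rewrite [\prod_(a in A) (- c - a)](reindex_inj oppr_inj) /=.
rewrite (eq_bigl (mem A) _ symA) -prodr_const -big_split.
by apply: eq_bigr => a _; rewrite /= mulN1r opprB opprK addrC.
Qed.

Lemma prodB_oppr (c : F) : prodB c = 2 ^+ m * prodB (- c).
Proof.
suff <- : (-1) ^+ #|B2 F (-1) (-1)| = 2 ^+ m :> F by apply: prod_subr_sym => a; rewrite mem_B2N.
(* The sign is read off from the values at 2 and -2. *)
have := prod_subr_sym 2 (fun a => mem_B2N a (-1) (-1)).
rewrite prodB_2 prodB_N2 mulrA -[X in X = _]mul1r => /(mulIf two_neq0) sign2m.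
move/(congr1 (fun x => x * 2 ^+ m)): sign2m.
by rewrite mul1r -mulrA -expr2 expr_half_card_sqr ?two_neq0 // mulr1.
Qed.

Lemma exists_sqrt_shift (c e : F) : (2 + c) ^+ m = 1 -> (2 - c) ^+ m = -1 ->
  e ^+ 2 = 1 -> exists2 s, s ^+ 2 = c + 2 & (s + 2) ^+ m = e.
Proof.
move=> cp cm e2.
have [b bc] : exists b, b ^+ 2 = c + 2 by apply: expr_half_card_eq1_sqr; rewrite addrC.
have uv := expr_half_card_sqrt_mul bc; rewrite cm in uv.
have b2 : b + 2 != 0.
  apply: expr_half_card_neq0; apply: contra_eq_neq uv => ->.
  by rewrite mul0r eq_sym oppr_eq0 oner_neq0.
have u2 := expr_half_card_sqr b2.
have v_u : (2 - b) ^+ m = - (b + 2) ^+ m.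
  by apply: (@mulfI _ ((b + 2) ^+ m)); rewrite ?expf_neq0 // uv mulrN -expr2 u2.
have : (b + 2) ^+ m ^+ 2 == e ^+ 2 by rewrite u2 e2.
rewrite eqf_sqr => /orP[/eqP ue|/eqP ue]; first by exists b.
by exists (- b); rewrite ?sqrrN // addrC v_u ue opprK.
Qed.

Lemma prodB_sqrt_shift (c s : F) : s ^+ 2 = c + 2 -> (s + 2) ^+ m = 1 ->
  (2 - c) ^+ m = -1 -> prodB c = s.
Proof.
move=> sc sp cm; have := expr_half_card_sqrt_mul sc; rewrite sp cm mul1r => sm.
by apply: (mulfI two_neq0); rewrite (prodB_sqrt sc) sp sm; ring.
Qed.

Lemma prodB_Bmp (c : F) : c \in B2 F (-1) 1 ->
  (exists s : F, s ^+ 2 = c + 2 /\ legendre (s + 2) = 1) /\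
  (forall s : F, s ^+ 2 = c + 2 -> legendre (s + 2) = 1 -> prodB c = s).
Proof.
rewrite inE => /andP[/eqP/legendre_eqN1 cm /eqP/legendre_eq1 cp]; split.
  have [s sc sp] := exists_sqrt_shift cp cm (expr1n _ 2).
  by exists s; split => //; apply/legendre_eq1.
by move=> s sc /legendre_eq1 sp; apply: prodB_sqrt_shift.
Qed.

Lemma prodB_Bpm (c : F) : c \in B2 F 1 (-1) ->
  (exists s : F, s ^+ 2 = 2 - c /\ legendre (s + 2) = -1) /\
  (forall s : F, s ^+ 2 = 2 - c -> legendre (s + 2) = -1 ->
     prodB c = - ((legendre (2 : F))%:~R * s)).
Proof.
rewrite inE => /andP[/eqP/legendre_eq1 cp /eqP/legendre_eqN1 cm].
have cm' : (2 - - c) ^+ m = -1 by rewrite opprK.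
split.
  have [s sc sp] := exists_sqrt_shift cp cm' (etrans (sqrrN 1) (expr1n _ 2)).
  by exists s; split; [rewrite sc addrC | apply/legendre_eqN1].
move=> s sc /legendre_eqN1 sp.
have sc' : s ^+ 2 = - c + 2 by rewrite sc addrC.
have := expr_half_card_sqrt_mul sc'; rewrite sp cm' mulN1r => /eqP; rewrite eqr_opp => /eqP sm.
have nsc : (- s) ^+ 2 = - c + 2 by rewrite sqrrN.
by rewrite prodB_oppr (prodB_sqrt_shift nsc _ cm') ?legendreE ?mulrN // addrC.
Qed.

Lemma prodB_Bpp (c : F) : c \in B2 F 1 1 ->
  (exists s : F, s ^+ 2 = c + 2) /\
  (forall s : F, s ^+ 2 = c + 2 ->
     [/\ s \in B2 F 1 1 -> prodB c = 2,
         s \notin B2 F 1 1 -> prodB c = -2 &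
         (s \in B2 F 1 1 /\ - s \in B2 F 1 1) \/
         (s \in B2 F (-1) (-1) /\ - s \in B2 F (-1) (-1))]).
Proof.
rewrite inE => /andP[/eqP/legendre_eq1 cm /eqP/legendre_eq1 cp]; split.
  by have [s sc] := expr_half_card_eq1_sqr cp; exists s; rewrite sc addrC.
move=> s sc; have := expr_half_card_sqrt_mul sc; rewrite cm => uv.
have s2 : s + 2 != 0.
  by apply: expr_half_card_neq0; apply: contra_eq_neq uv => ->; rewrite mul0r eq_sym oner_neq0.
have [up|um] := expr_half_card_pm1 s2.
  have vp : (2 - s) ^+ m = 1 by move: uv; rewrite up mul1r.
  have sB : s \in B2 F 1 1.
    by rewrite inE; apply/andP; split; apply/eqP/legendre_eq1; rewrite // addrC.
  have Pc : prodB c = 2 by apply: (mulfI two_neq0); rewrite (prodB_sqrt sc) up vp; ring.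
  by split=> //; [rewrite sB | left; rewrite mem_B2N].
have vm : (2 - s) ^+ m = -1 by move: uv; rewrite um mulN1r => /eqP; rewrite eqr_oppLR => /eqP.
have sB : s \in B2 F (-1) (-1).
  by rewrite inE; apply/andP; split; apply/eqP/legendre_eqN1; rewrite // addrC.
have Pc : prodB c = -2 by apply: (mulfI two_neq0); rewrite (prodB_sqrt sc) um vm; ring.
split=> //; last by right; rewrite mem_B2N.
by rewrite inE => /andP[/eqP/legendre_eq1]; rewrite vm => /eqP; rewrite eq_sym (negPf one_neqN1).
Qed.

Lemma prodB_Bmm (c : F) : c \in B2 F (-1) (-1) -> prodB c = 0.
Proof. by move=> cB; rewrite (bigD1 c) //= subrr mul0r. Qed.

End OddFiniteField.

Theorem theorem7p2 (F : finFieldType) (hodd : odd #|F|) (c : F) :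
  let P := \prod_(a in B2 F (-1) (-1)) (c - a) in
  (c = 2 -> P = 2) /\
      (c = -2 -> P = (legendre (2 : F))%:~R * 2) /\
      (c \in B2 F (-1) 1 ->
        (exists s : F, s ^+ 2 = c + 2 /\ legendre (s + 2) = 1) /\
        (forall s : F, s ^+ 2 = c + 2 -> legendre (s + 2) = 1 -> P = s)) /\
      (c \in B2 F 1 (-1) ->
        (exists s : F, s ^+ 2 = 2 - c /\ legendre (s + 2) = -1) /\
        (forall s : F, s ^+ 2 = 2 - c -> legendre (s + 2) = -1 ->
           P = - ((legendre (2 : F))%:~R * s))) /\
      (c \in B2 F 1 1 ->
        (exists s : F, s ^+ 2 = c + 2) /\
        (forall s : F, s ^+ 2 = c + 2 ->
           [/\ s \in B2 F 1 1 -> P = 2,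
               s \notin B2 F 1 1 -> P = -2 &
               (s \in B2 F 1 1 /\ - s \in B2 F 1 1) \/
               (s \in B2 F (-1) (-1) /\ - s \in B2 F (-1) (-1))])) /\
      (c \in B2 F (-1) (-1) -> P = 0).
Proof.
move=> P; rewrite {}/P; split; first by move=> ->; exact: prodB_2.
split; first by move=> ->; rewrite prodB_N2 // legendreE.
split; first exact: prodB_Bmp.
split; first exact: prodB_Bpm.
split; first exact: prodB_Bpp.
exact: prodB_Bmm.
Qed.
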